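(* Let $m\ge 4$, $t$, $g$ be positive integers with $t\ge g+1$, and put $\alpha=(t-1)-g$. Consider a bin configuration of the game $G(m,t,g)$ in which every current bin load is at most $t-1$. Suppose there are two distinct bins $A,B$ such that both of the following hold: 1. the sum of the loads of all bins other than $A$ and $B$ is at least $(m-2)g-2\alpha-1$; 2. there is a bin $C\notin\{A,B\}$ whose load is strictly less than $\alpha$. Then Algorithm wins from this configuration.
   Context: Bin stretching game $G(m,t,g)$: there are $m$ bins. In each round Adversary presents an item of positive integer size, and Algorithm then irrevocably places it into one of the $m$ bins. The load of a bin is the total size of the items in it. A bin configuration consists of: - the current loads $L_1,\dots,L_m$ of the bins, and - the multiset $\mathcal I$ of items presented so far, placed so that the bins have exactly these loads. ''Algorithm wins from this configuration'' means the following. There is an online rule which, given the configuration and the items presented so far, assigns each newly presented item to a bin. This rule must guarantee: for every finite sequence $e_1,\dots,e_j$ of further positive-integer items such that the multiset $\mathcal I\cup\{e_1,\dots,e_j\}$ can be partitioned into $m$ parts each of total size at most $g$, every bin load is at most $t-1$ after these items are placed. *)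

From mathcomp Require Import all_boot.
Set Implicit Arguments. Unset Strict Implicit. Unset Printing Implicit Defensive.

(* A bin configuration: loads L over m bins and item list I (a multiset,
   given as a sequence) together with some placement of I yielding L. *)
Definition is_config (m : nat) (L : 'I_m -> nat) (I : seq nat) : Prop :=
  all (fun e => 0 < e) I /\
  exists pl : 'I_(size I) -> 'I_m,
    forall b : 'I_m, L b = \sum_(i < size I | pl i == b) nth 0 I i.

Definition packable (m g : nat) (s : seq nat) : Prop :=
  exists a : 'I_(size s) -> 'I_m,
    forall b : 'I_m, \sum_(i < size s | a i == b) nth 0 s i <= g.

(* Load of bin b after the new items es have been placed by the online rule f:
   the k-th new item (0-based) is placed into bin f (take k.+1 es), i.e. the
   rule sees all new items presented so far, including the current one. *)
Definition load_after (m : nat) (L : 'I_m -> nat) (f : seq nat -> 'I_m)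
    (es : seq nat) (b : 'I_m) : nat :=
  L b + \sum_(k < size es | f (take k.+1 es) == b) nth 0 es k.

Definition alg_wins (m t g : nat) (L : 'I_m -> nat) (I : seq nat) : Prop :=
  exists f : seq nat -> 'I_m,
    forall es : seq nat,
      all (fun e => 0 < e) es ->
      packable m g (I ++ es) ->
      forall b : 'I_m, load_after L f es b <= t - 1.

(** Play first fit on the two bins [A] and [B] and send any item that fits
    in neither to the almost empty bin [C].  Since all items have size at most
    [g], total size at most [m g], and the bins other than [A], [B] already
    hold nearly [(m-2) g], the loads of [A], [B] plus the new items sum to at
    most [2(t-1)+1].  Hence the first item sent to [C] fits there
    ([L C + g <= t-1]), and afterwards [A] together with that item exceeds
    [t-1], so everything that arrives later fits into [B]. *)

From mathcomp Require Import all_boot zify.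
Set Implicit Arguments. Unset Strict Implicit. Unset Printing Implicit Defensive.

Lemma sum_nth_sumn (s : seq nat) : \sum_(i < size s) nth 0 s i = sumn s.
Proof. by rewrite sumnE (big_nth 0) big_mkord. Qed.

Lemma is_config_sum m (L : 'I_m -> nat) I : is_config L I -> \sum_b L b = sumn I.
Proof.
case=> _ [pl HL]; rewrite -sum_nth_sumn (partition_big pl xpredT) //=.
by apply: eq_bigr => b _; rewrite HL.
Qed.

Lemma packable_sumn m g s : packable m g s -> sumn s <= m * g.
Proof.
case=> a Ha; rewrite -sum_nth_sumn (partition_big a xpredT) //=.
apply: (@leq_trans (\sum_(b : 'I_m) g)); first exact: leq_sum.
by rewrite sum_nat_const card_ord mulnC.
Qed.

Lemma packable_all_le m g s : packable m g s -> all (fun e => e <= g) s.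
Proof.
case=> a Ha; apply/(all_nthP 0) => i lt_i_s.
apply: leq_trans (Ha (a (Ordinal lt_i_s))).
by rewrite (bigD1 (Ordinal lt_i_s)) //= leq_addr.
Qed.

Lemma load_after_rcons m (L : 'I_m -> nat) f es x b :
  load_after L f (rcons es x) b =
  load_after L f es b + (if f (rcons es x) == b then x else 0).
Proof.
rewrite /load_after -addnA; congr (_ + _).
rewrite -(big_mkord (fun k => f (take k.+1 (rcons es x)) == b)
                    (fun k => nth 0 (rcons es x) k)).
rewrite -(big_mkord (fun k => f (take k.+1 es) == b) (fun k => nth 0 es k)).
rewrite size_rcons big_mkcond big_nat_recr //= [in RHS]big_mkcond /=.
congr (_ + _).
  apply: eq_big_nat => i /andP[_ lt_i_es].
  by rewrite -cats1 takel_cat // nth_cat lt_i_es.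
by rewrite -[(size es).+1](size_rcons es x) take_size nth_rcons ltnn eqxx.
Qed.

Section OnlineRule.

Variables (m : nat) (choose : ('I_m -> nat) -> nat -> 'I_m).

Definition place (ld : 'I_m -> nat) (b : 'I_m) (x : nat) : 'I_m -> nat :=
  fun d => ld d + (if b == d then x else 0).

Definition run_loads (L : 'I_m -> nat) (s : seq nat) : 'I_m -> nat :=
  foldl (fun ld x => place ld (choose ld x) x) L s.

(* The rule sees the new item as the last entry of its argument and replays
   the earlier ones to recover the current loads. *)
Definition online_rule (L : 'I_m -> nat) (s : seq nat) : 'I_m :=
  choose (run_loads L (take (size s).-1 s)) (last 0 s).

Lemma online_rule_rcons L s x :
  online_rule L (rcons s x) = choose (run_loads L s) x.
Proof.
by rewrite /online_rule size_rcons /= -cats1 take_size_cat // cats1 last_rcons.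
Qed.

Lemma load_after_online_rule L es :
  load_after L (online_rule L) es =1 run_loads L es.
Proof.
elim/last_ind: es => [|es x IHes] b.
  by rewrite /load_after big_ord0 addn0.
by rewrite load_after_rcons IHes online_rule_rcons /run_loads foldl_rcons.
Qed.

End OnlineRule.

Section FirstFit.

Variables (m tt g : nat) (A B C : 'I_m) (L : 'I_m -> nat).

Definition first_fit (ld : 'I_m -> nat) (x : nat) : 'I_m :=
  if ld A + x <= tt then A else if ld B + x <= tt then B else C.

Hypotheses (neq_AB : A != B) (neq_CA : C != A) (neq_CB : C != B).
Hypotheses (L_le : forall d, L d <= tt) (LC_g : L C + g <= tt).

(* The last clause records that once [C] has received an item, [A] and the
   amount added to [C] together exceed [tt]. *)
Definition first_fit_inv (ld : 'I_m -> nat) (s : nat) : Prop :=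
  [/\ forall d, ld d <= tt,
      ld A + ld B + ld C = L A + L B + L C + s
    & ld C = L C \/ tt < ld A + ld C - L C].

Lemma first_fit_inv_place ld s x :
  first_fit_inv ld s -> x <= g -> L A + L B + s + x <= tt.*2.+1 ->
  first_fit_inv (place ld (first_fit ld x) x) (s + x).
Proof.
case=> ld_le sum_ld Cstate x_g total_le.
have place_le b : ld b + x <= tt -> forall d, place ld b x d <= tt.
  by move=> fit_b d; rewrite /place; case: eqP => [<- | _]; rewrite ?addn0.
have neq_BA : B != A by rewrite eq_sym.
have neq_AC : A != C by rewrite eq_sym.
have neq_BC : B != C by rewrite eq_sym.
have [fitA | overA] := leqP (ld A + x) tt.
  have -> : first_fit ld x = A by rewrite /first_fit fitA.
  split; first exact: place_le;
    by rewrite /place ?eqxx !(negbTE neq_AB, negbTE neq_AC) !addn0; lia.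
have [fitB | overB] := leqP (ld B + x) tt.
  have -> : first_fit ld x = B by rewrite /first_fit leqNgt overA fitB.
  split; first exact: place_le;
    by rewrite /place ?eqxx !(negbTE neq_BA, negbTE neq_BC) !addn0; lia.
have fitC : ld C + x <= tt by case: Cstate; lia.
have -> : first_fit ld x = C by rewrite /first_fit leqNgt overA leqNgt overB.
split; first exact: place_le;
  by rewrite /place ?eqxx !(negbTE neq_CA, negbTE neq_CB) !addn0; lia.
Qed.

Lemma run_first_fit_le es :
  all (fun e => e <= g) es -> L A + L B + sumn es <= tt.*2.+1 ->
  forall d, run_loads first_fit L es d <= tt.
Proof.
suff inv_es : all (fun e => e <= g) es -> L A + L B + sumn es <= tt.*2.+1 ->
  first_fit_inv (run_loads first_fit L es) (sumn es) by move=> *; case: inv_es.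
elim/last_ind: es => [|es x IHes]; first by split; rewrite ?addn0; auto.
rewrite all_rcons sumn_rcons /run_loads foldl_rcons => /andP[x_g es_g] total_le.
apply: first_fit_inv_place => //; last by lia.
by apply: IHes => //; lia.
Qed.

End FirstFit.

Theorem mainTheorem2 (m t g : nat) (L : 'I_m -> nat) (I : seq nat) (A B : 'I_m) :
  4 <= m -> 0 < t -> 0 < g -> g + 1 <= t ->
  is_config L I ->
  (forall b : 'I_m, L b <= t - 1) ->
  A != B ->
  (m - 2) * g - 2 * (t - 1 - g) - 1 <= \sum_(b : 'I_m | (b != A) && (b != B)) L b ->
  (exists C : 'I_m, [/\ C != A, C != B & L C < t - 1 - g]) ->
  alg_wins t g L I.
Proof.
move=> m_ge4 _ _ g_lt_t conf L_le neq_AB rest_ge [C [neq_CA neq_CB LC_lt]].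
exists (online_rule (first_fit (t - 1) A B C) L) => es _ pack_es b.
rewrite load_after_online_rule.
have total_le := packable_sumn pack_es.
rewrite sumn_cat -(is_config_sum conf) (bigD1 A) //= (bigD1 B) 1?eq_sym //= in total_le.
have mg_split : m * g = (m - 2) * g + g + g.
  by rewrite -addnA addnn -mul2n -mulnDl subnK // (leq_trans _ m_ge4).
have := packable_all_le pack_es; rewrite all_cat => /andP[_ es_g].
apply: (run_first_fit_le (g := g)) => //; first by lia.
(* lia needs the two copies of [rest] and of [(m - 2) * g] as single atoms. *)
set rest := \sum_(b < m | _) _ in rest_ge total_le.
rewrite mg_split in total_le; rewrite -addnn.
by move: ((m - 2) * g) total_le rest_ge => k; lia.
Qed.
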